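(* Assume $\operatorname{rank}(X)=n$, let $m\ge\nu_n(X)$ be an integer, and let $A^\circ=[a_1^\circ\ \cdots\ a_s^\circ]\in\mathbb{R}^{n\times s}$ satisfy $\min_{i\in\mathbb{S}}|I_i(A^\circ)|\ge s\,m$. Let $$\gamma_m=\inf\big\{\|X_I^\top\eta\|_1:\eta\in\mathbb{R}^n,\ \|\eta\|_2=1,\ I\subset\mathbb{T},\ |I|\ge m\big\}.$$ If for some $r\in\{0,\ldots,N\}$ with $\xi_r(\varpi^N)<1/2$, $$\min_{i\ne j}\|a_i^\circ-a_j^\circ\|_2>\frac{2\,\delta_r(A^\circ)}{\gamma_m\big(1-2\xi_r(\varpi^N)\big)},$$ then $A^\circ$ and $\hat A$ are comparable over $\varpi^N$ for every $\hat A\in\arg\min_A\mathcal{J}(A)$.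
   Context: Data: integers $n,s,N\ge1$ and a dataset $\varpi^N=((x_1,y_1),\ldots,(x_N,y_N))$ with $x_t\in\mathbb{R}^n$, $y_t\in\mathbb{R}$; $X=[x_1\ \cdots\ x_N]\in\mathbb{R}^{n\times N}$, and $X_I$ denotes the submatrix of columns indexed by $I$. Let $\mathbb{T}=\{1,\ldots,N\}$, $\mathbb{S}=\{1,\ldots,s\}$. For $A=[a_1\ \cdots\ a_s]\in\mathbb{R}^{n\times s}$, $\sigma_A:\mathbb{T}\to\mathbb{S}$ is a switching signal satisfying $\sigma_A(t)\in\arg\min_{i\in\mathbb{S}}|y_t-x_t^\top a_i|$ for all $t$, selected uniquely by a fixed rule depending only on $A$ and the data (among all admissible choices, one maximizing $\min_{i}|I_i(A)|$, ties then broken by assigning the smallest admissible index). $I_i(A)=\{t\in\mathbb{T}:\sigma_A(t)=i\}$. $\phi(A)=\big(y_1-x_1^\top a_{\sigma_A(1)},\ldots,y_N-x_N^\top a_{\sigma_A(N)}\big)^\top$, $\mathcal{J}(A)=\|\phi(A)\|_1$, $\phi_{\mathcal{T}}(A)$ its subvector indexed by $\mathcal{T}\subset\mathbb{T}$. $\mathcal{S}_r=\{w\in\mathbb{R}^N:\|w\|_0\le r\}$, $\delta_r(A)=\inf_{w\in\mathcal{S}_r}\|\phi(A)-w\|_1$. The $r$-th concentration ratio is $$\xi_r(\varpi^N)=\sup\Big\{\frac{\|\phi_{\mathcal{T}}(A)-\phi_{\mathcal{T}}(A')\|_1}{\|\phi(A)-\phi(A')\|_1}: A,A'\in\mathbb{R}^{n\times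 s},\ \mathcal{T}\subset\mathbb{T},\ \phi(A)\ne\phi(A'),\ |\mathcal{T}|\le r\Big\}.$$ Genericity index: for $\operatorname{rank}(X)=n$, $\nu_n(X)$ is the smallest integer $m$ such that every submatrix formed by $m$ columns of $X$ has rank $n$. Comparability: $A,A'$ are comparable over $\varpi^N$ if there is a permutation $\pi$ of $\mathbb{S}$ with $|I_i(A)\cap I_{\pi(i)}(A')|\ge\nu_n(X)$ for all $i$. *)

From HB Require Import structures.
From mathcomp Require Import all_boot all_order all_algebra.
From mathcomp Require Import perm.
From mathcomp Require Import all_classical all_reals.
Set Implicit Arguments. Unset Strict Implicit. Unset Printing Implicit Defensive.
Import Order.TTheory GRing.Theory Num.Theory.
Local Open Scope ring_scope.

Section PWA.
Variables (R : realType) (n s N : nat).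
Variables (X : 'M[R]_(n, N)) (y : 'I_N -> R).

Definition res (A : 'M[R]_(n, s)) (t : 'I_N) (i : 'I_s) : R :=
  y t - \sum_(k < n) X k t * A k i.

Definition admissible (A : 'M[R]_(n, s)) (sg : {ffun 'I_N -> 'I_s}) : bool :=
  [forall t, forall i, `|res A t (sg t)| <= `|res A t i|].

Definition Iset_of (sg : {ffun 'I_N -> 'I_s}) (i : 'I_s) : {set 'I_N} :=
  [set t | sg t == i].

(* min_i |I_i| (N serves as neutral element, since |I_i| <= N) *)
Definition mincard (sg : {ffun 'I_N -> 'I_s}) : nat :=
  \big[minn/N]_(i < s) #|Iset_of sg i|.

Definition optimal (A : 'M[R]_(n, s)) (sg : {ffun 'I_N -> 'I_s}) : bool :=
  admissible A sg &&
  [forall sg' : {ffun 'I_N -> 'I_s}, admissible A sg' ==> (mincard sg' <= mincard sg)%N].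

Definition lexle (sg sg' : {ffun 'I_N -> 'I_s}) : bool :=
  (sg == sg') ||
  [exists t : 'I_N, (sg t < sg' t)%N &&
     [forall t' : 'I_N, (t' < t)%N ==> (sg t' == sg' t')]].

(* the selected switching signal sigma_A (None only if no admissible signal
   exists, which cannot happen when s >= 1) *)
Definition sigma_opt (A : 'M[R]_(n, s)) : option {ffun 'I_N -> 'I_s} :=
  [pick sg | optimal A sg &&
     [forall sg' : {ffun 'I_N -> 'I_s}, optimal A sg' ==> lexle sg sg']].

Definition Iset (A : 'M[R]_(n, s)) (i : 'I_s) : {set 'I_N} :=
  [set t | if sigma_opt A is Some sg then sg t == i else false].

Definition phi (A : 'M[R]_(n, s)) (t : 'I_N) : R :=
  if sigma_opt A is Some sg then res A t (sg t) else 0.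

Definition l1 (v : 'I_N -> R) : R := \sum_t `|v t|.

Definition J (A : 'M[R]_(n, s)) : R := l1 (phi A).

Definition delta (r : nat) (A : 'M[R]_(n, s)) : R :=
  inf [set d | exists w : 'I_N -> R,
         (#|[set t | w t != 0%R]| <= r)%N /\ d = l1 (fun t => phi A t - w t)].

Definition xi (r : nat) : R :=
  sup [set q | exists (A A' : 'M[R]_(n, s)) (T : {set 'I_N}),
         phi A <> phi A' /\ (#|T| <= r)%N /\
         q = (\sum_(t in T) `|phi A t - phi A' t|) / l1 (fun t => phi A t - phi A' t)].

(* X_I : submatrix of the columns indexed by I (in increasing order) *)
Definition Xsub (I : {set 'I_N}) : 'M[R]_(n, #|I|) :=
  colsub (fun j : 'I_#|I| => enum_val j) X.

Definition all_sub_full (m : nat) : bool :=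
  [forall I : {set 'I_N}, (#|I| == m) ==> (\rank (Xsub I) == n)%N].

(* genericity index nu_n(X): smallest m with all_sub_full m
   (all_sub_full N.+1 holds vacuously, so this is the exact minimum) *)
Definition nu : nat := find all_sub_full (iota 0 N.+2).

Definition comparable_over (A A' : 'M[R]_(n, s)) : Prop :=
  exists pi : {perm 'I_s},
    forall i : 'I_s, (nu <= #|Iset A i :&: Iset A' (pi i)|)%N.

Definition norm2 (v : 'cV[R]_n) : R := Num.sqrt (\sum_(k < n) v k 0 ^+ 2).

Definition gamma (m : nat) : R :=
  inf [set g | exists (eta : 'cV[R]_n) (I : {set 'I_N}),
         norm2 eta = 1 /\ (m <= #|I|)%N /\
         g = \sum_(j < #|I|) `|((Xsub I)^T *m eta) j 0|].

End PWA.

From HB Require Import structures.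
From mathcomp Require Import all_boot all_order all_algebra.
From mathcomp Require Import perm.
From mathcomp Require Import all_classical all_reals.
From mathcomp Require Import fintype finset.
From mathcomp Require Import ring lra.
Import Order.TTheory GRing.Theory Num.Theory.
Local Open Scope ring_scope.
Set Implicit Arguments. Unset Strict Implicit. Unset Printing Implicit Defensive.

(* Let h = phi(Ahat) - phi(A0).
   (1) [error_bound] J(Ahat) <= J(A0), a sparse approximation w of phi(A0)
       and the concentration ratio on the support of w give
       (1 - 2 xi_r) ||h||_1 <= 2 delta_r(A0).
   (2) [block_lower_bound] On a block I_i(A0) :&: I_j(Ahat) we have
       h_t = x_t^T (a0_i - ahat_j), so a block of >= m points contributes
       >= gamma_m ||a0_i - ahat_j||_2 to ||h||_1; gamma_m > 0 because any
       nu_n(X) columns of X have rank n [gamma_pos].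
   (3) [no_shared_mode] Two modes i <> i' of A0 with large blocks against the
       same mode of Ahat would give gamma_m ||a0_i - a0_i'||_2 <= ||h||_1,
       contradicting (1) and the separation hypothesis.
   By pigeonhole, |I_i(A0)| >= s m maps each mode of A0 to a mode of Ahat
   sharing a block of >= m >= nu_n(X) points; by (3) this map is injective,
   hence a permutation. *)

Lemma ex_min_total (T : finType) (le : rel T) (P : pred T) :
  transitive le -> total le ->
  (exists x, P x) -> exists2 x, P x & forall y, P y -> le x y.
Proof.
move=> le_trans le_total [x0 Px0].
pose below x := #|[set z | P z && le z x]|.
have [x Px x_min] := arg_minnP below Px0.
exists x => // z Pz; apply/negPn/negP => not_le_xz.
have le_zx : le z x by have := le_total x z; rewrite (negbTE not_le_xz).
have : (below z < below x)%N.
  apply/proper_card/properP; split.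
    apply/subsetP => w; rewrite !inE => /andP[-> le_wz].
    exact: le_trans le_wz le_zx.
  exists x; rewrite !inE Px ?not_le_xz //=.
  by have := le_total x x; rewrite orbb.
by rewrite ltnNge x_min.
Qed.

Section Lexicographic.
Variables s N : nat.

Lemma lexle_trans : transitive (@lexle s N).
Proof.
move=> b a c /orP[/eqP-> //|/existsP[t1 /andP[lt1 eq1]]].
case/orP=> [/eqP<-|/existsP[t2 /andP[lt2 eq2]]].
  by apply/orP; right; apply/existsP; exists t1; rewrite lt1.
apply/orP; right; apply/existsP.
have [lt12|ge12] := ltnP t1 t2.
  exists t1; rewrite -(eqP (forall_inP eq2 t1 lt12)) lt1 /=.
  apply/forall_inP => t lt_t; rewrite (eqP (forall_inP eq1 t lt_t)).
  exact: (forall_inP eq2) (ltn_trans lt_t lt12).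
exists t2; apply/andP; split.
  case: (ltngtP t2 t1) ge12 => // [lt21 _|eq21 _].
    by rewrite (eqP (forall_inP eq1 t2 lt21)).
  by move: lt2; rewrite (val_inj eq21); exact: ltn_trans lt1.
apply/forall_inP => t lt_t; rewrite -(eqP (forall_inP eq2 t lt_t)).
exact: (forall_inP eq1) (leq_trans lt_t ge12).
Qed.

(* Distinct signals are ordered by their first disagreement. *)
Lemma lexle_total : total (@lexle s N).
Proof.
move=> a b; have [->|neq_ab] := eqVneq a b; first by rewrite /lexle eqxx.
have [t0 ht0] : exists t, a t != b t.
  apply/existsP; apply: contraR neq_ab; rewrite negb_exists => /forallP eq_ab.
  by apply/eqP/ffunP => t; apply/eqP; rewrite -[_ == _]negbK eq_ab.
have [t diff_t t_min] :=
  @arg_minnP _ t0 (fun t => a t != b t) (fun t : 'I_N => val t) ht0.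
have eq_ab : [forall t' : 'I_N, (t' < t)%N ==> (a t' == b t')].
  apply/forall_inP => t' lt_t'.
  by apply: contraLR lt_t' => /t_min; rewrite -leqNgt.
have eq_ba : [forall t' : 'I_N, (t' < t)%N ==> (b t' == a t')].
  by apply/forall_inP => t' /(forall_inP eq_ab); rewrite eq_sym.
case: (ltngtP (a t) (b t)) => [lt|gt|eq].
- by apply/orP; left; apply/orP; right; apply/existsP; exists t; rewrite lt.
- by apply/orP; right; apply/orP; right; apply/existsP; exists t; rewrite gt.
- by move: diff_t; rewrite (val_inj eq) eqxx.
Qed.

End Lexicographic.

Section SwitchingSignal.
Variables (R : realType) (n s N : nat) (X : 'M[R]_(n, N)) (y : 'I_N -> R).
Variable A : 'M[R]_(n, s).
Hypothesis s_gt0 : (0 < s)%N.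

(* Choosing for every t a mode of minimal residual gives an admissible signal. *)
Lemma admissible_exists : exists sg, admissible X y A sg.
Proof.
have best t : exists i : 'I_s, [forall i', `|res X y A t i| <= `|res X y A t i'|].
  have [i _ i_min] := @ex_min_total _ (fun i i' => `|res X y A t i| <= `|res X y A t i'|)
    predT (fun _ _ _ => @le_trans _ _ _ _ _) (fun _ _ => le_total _ _)
    (ex_intro _ (Ordinal s_gt0) isT).
  by exists i; apply/forallP => i'; exact: i_min.
exists [ffun t => xchoose (best t)]; apply/forallP => t; apply/forallP => i.
by rewrite ffunE; exact: forallP (xchooseP (best t)) i.
Qed.

Lemma optimal_exists : exists sg, optimal X y A sg.
Proof.
have [sg adm sg_max] := @ex_min_total _ (fun a b => mincard b <= mincard a)%N
  (admissible X y A) (fun _ _ _ h1 h2 => leq_trans h2 h1) (fun _ _ => leq_total _ _)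
  admissible_exists.
by exists sg; rewrite /optimal adm; apply/forall_inP => sg'; exact: sg_max.
Qed.

Lemma sigma_opt_some : exists sg, sigma_opt X y A = Some sg.
Proof.
have [sg opt sg_min] := ex_min_total (@lexle_trans s N) (@lexle_total s N)
  optimal_exists.
rewrite /sigma_opt; case: pickP => [sg' _|none]; first by exists sg'.
have := none sg; rewrite opt /=.
by have -> : [forall sg', optimal X y A sg' ==> lexle sg sg']
  by apply/forall_inP => sg'; exact: sg_min.
Qed.

End SwitchingSignal.

Section EuclideanNorm.
Variables (R : realType) (n : nat).
Implicit Types u v : 'cV[R]_n.

Lemma norm2_scale (c : R) v : norm2 (c *: v) = `|c| * norm2 v.
Proof.
rewrite /norm2 -sqrtr_sqr -sqrtrM ?sqr_ge0 // mulr_sumr.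
by congr Num.sqrt; apply: eq_bigr => k _; rewrite mxE exprMn.
Qed.

Lemma norm2_opp v : norm2 (- v) = norm2 v.
Proof. by rewrite -scaleN1r norm2_scale normrN normr1 mul1r. Qed.

Lemma cauchy_schwarz u v :
  (\sum_k u k 0 * v k 0) ^+ 2 <= (\sum_k u k 0 ^+ 2) * (\sum_k v k 0 ^+ 2).
Proof.
set a := \sum_k u k 0 ^+ 2; set b := \sum_k v k 0 ^+ 2.
set d := \sum_k u k 0 * v k 0.
have b_ge0 : 0 <= b by apply: sumr_ge0 => k _; exact: sqr_ge0.
have [b0|b_neq0] := eqVneq b 0.
  have v0 k : v k 0 = 0.
    apply/eqP; rewrite -sqrf_eq0; apply/eqP.
    by apply: (psumr_eq0P (P := predT) (F := fun k => v k 0 ^+ 2)) => // j _;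
      exact: sqr_ge0.
  by rewrite /d big1 ?b0 ?expr0n ?mulr0 // => k _; rewrite v0 mulr0.
have expand (p q : R) :
    \sum_k (p * u k 0 - q * v k 0) ^+ 2 = p ^+ 2 * a - 2 * p * q * d + q ^+ 2 * b.
  rewrite /a /b /d !mulr_sumr -sumrB -big_split /=; apply: eq_bigr => k _.
  by rewrite sqrrB !exprMn; ring.
(* expanding 0 <= sum_k (b u_k - d v_k)^2 gives 0 <= b (a b - d^2) *)
have : 0 <= b * (a * b - d ^+ 2).
  have -> : b * (a * b - d ^+ 2) = b ^+ 2 * a - 2 * b * d * d + d ^+ 2 * b by ring.
  by rewrite -expand; apply: sumr_ge0 => k _; exact: sqr_ge0.
by rewrite pmulr_rge0 ?subr_ge0 // lt_def b_neq0.
Qed.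

Lemma norm2_triangle u v : norm2 (u + v) <= norm2 u + norm2 v.
Proof.
rewrite /norm2.
set a := \sum_k u k 0 ^+ 2; set b := \sum_k v k 0 ^+ 2.
set d := \sum_k u k 0 * v k 0.
have a_ge0 : 0 <= a by apply: sumr_ge0 => k _; exact: sqr_ge0.
have b_ge0 : 0 <= b by apply: sumr_ge0 => k _; exact: sqr_ge0.
have expand : \sum_k (u + v) k 0 ^+ 2 = a + 2 * d + b.
  rewrite /a /b /d mulr_sumr -!big_split /=; apply: eq_bigr => k _.
  by rewrite mxE sqrrD; ring.
have d_le : d <= Num.sqrt a * Num.sqrt b.
  rewrite -sqrtrM //; apply: le_trans (ler_norm d) _.
  by rewrite -sqrtr_sqr ler_sqrt ?mulr_ge0 //; exact: cauchy_schwarz.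
have rhs_ge0 : 0 <= Num.sqrt a + Num.sqrt b by rewrite addr_ge0 ?sqrtr_ge0.
rewrite expand -(ger0_norm rhs_ge0) -sqrtr_sqr ler_sqrt ?sqr_ge0 //.
by rewrite sqrrD !sqr_sqrtr //; lra.
Qed.

Lemma norm2_le_l1 v : norm2 v <= \sum_k `|v k 0|.
Proof.
have l1_ge0 : 0 <= \sum_k `|v k 0| by apply: sumr_ge0.
rewrite /norm2 -(ger0_norm l1_ge0) -sqrtr_sqr ler_sqrt ?sqr_ge0 //.
rewrite expr2 mulr_suml; apply: ler_sum => k _.
rewrite -real_normK ?num_real // expr2; apply: ler_wpM2l => //.
by rewrite (bigD1 k) //= lerDl sumr_ge0.
Qed.

End EuclideanNorm.

Lemma sum_sub_le (R : numDomainType) (I : finType) (P : pred I) (F : I -> R) :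
  (forall i, 0 <= F i) -> \sum_(i | P i) F i <= \sum_i F i.
Proof.
move=> F_ge0; rewrite big_mkcond /=; apply: ler_sum => i _.
by case: ifP.
Qed.

Lemma subset_of_card (T : finType) (I : {set T}) k : (k <= #|I|)%N ->
  exists2 J : {set T}, J \subset I & #|J| = k.
Proof.
elim: k => [|k IH] lt_k; first by exists set0; rewrite ?sub0set ?cards0.
have [J sub_JI card_J] := IH (ltnW lt_k).
have /properP[_ [x xI xJ]] : J \proper I by rewrite properEcard sub_JI card_J.
exists (x |: J); first by rewrite subUset sub1set xI sub_JI.
by rewrite cardsU1 xJ card_J.
Qed.

Section Genericity.
Variables (R : realType) (n N : nat) (X : 'M[R]_(n, N)).

Definition xdot (t : 'I_N) (eta : 'cV[R]_n) : R := \sum_(k < n) X k t * eta k 0.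

Lemma xdot_scale t (c : R) eta : xdot t (c *: eta) = c * xdot t eta.
Proof. by rewrite /xdot mulr_sumr; apply: eq_bigr => k _; rewrite mxE mulrCA. Qed.

Lemma Xsub_l1 (I : {set 'I_N}) (eta : 'cV[R]_n) :
  \sum_(j < #|I|) `|((Xsub X I)^T *m eta) j 0| = \sum_(t in I) `|xdot t eta|.
Proof.
rewrite (big_enum_val (A := mem I) (fun t => `|xdot t eta|)) /=.
by apply: eq_bigr => j _; rewrite mxE /xdot; congr `|_|; apply: eq_bigr => k _;
  rewrite !mxE.
Qed.

(* The defining minimum of nu_n(X) is attained: any nu_n(X) columns have
   rank n (the search range contains N + 1, where the property is vacuous). *)
Lemma nu_full : all_sub_full X (nu X).
Proof.
have full_N1 : all_sub_full X N.+1.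
  apply/forall_inP => I /eqP card_I; exfalso.
  by have := max_card I; rewrite card_I card_ord ltnn.
have has_full : has (all_sub_full X) (iota 0 N.+2).
  by apply/hasP; exists N.+1; rewrite // mem_iota add0n ltnSn.
have := nth_find 0 has_full; rewrite -/(nu X) nth_iota //.
by rewrite -(size_iota 0 N.+2) -has_find.
Qed.

Definition pinv_l1 (J : {set 'I_N}) : R :=
  \sum_(k < n) \sum_(j < #|J|) `|pinvmx (Xsub X J)^T k j|.

Lemma pinv_l1_ge0 J : 0 <= pinv_l1 J.
Proof. by apply: sumr_ge0 => k _; apply: sumr_ge0. Qed.

(* When X_J has rank n, eta is recovered from X_J^T eta by a left inverse,
   which bounds ||eta||_2 by a multiple of ||X_J^T eta||_1. *)
Lemma full_rank_bound (J : {set 'I_N}) (eta : 'cV[R]_n) :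
  \rank (Xsub X J) = n -> norm2 eta <= pinv_l1 J * \sum_(t in J) `|xdot t eta|.
Proof.
move=> rank_J; set L := pinvmx (Xsub X J)^T.
have L_left_inv : L *m (Xsub X J)^T = 1%:M.
  have := @mulmxKpV _ _ _ _ 1%:M (Xsub X J)^T; rewrite mul1mx; apply.
  by rewrite sub1mx /row_full mxrank_tr rank_J.
set v := (Xsub X J)^T *m eta.
have eta_v : eta = L *m v by rewrite /v mulmxA L_left_inv mul1mx.
rewrite -Xsub_l1 -/v; apply: le_trans (norm2_le_l1 eta) _.
rewrite /pinv_l1 mulr_suml; apply: ler_sum => k _.
rewrite eta_v mxE mulr_suml; apply: le_trans (ler_norm_sum _ _ _) _.
apply: ler_sum => j _; rewrite normrM; apply: ler_wpM2l => //.
by rewrite (bigD1 j) //= lerDl sumr_ge0.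
Qed.

Lemma genericity_lower_bound : exists2 c : R, 0 < c &
  forall (eta : 'cV[R]_n) (I : {set 'I_N}),
    norm2 eta = 1 -> (nu X <= #|I|)%N -> c <= \sum_(t in I) `|xdot t eta|.
Proof.
set S := \sum_(J : {set 'I_N}) pinv_l1 J.
have S_ge0 : 0 <= S by apply: sumr_ge0 => J _; exact: pinv_l1_ge0.
have S1_gt0 : 0 < S + 1 by rewrite ltr_wpDl.
exists (S + 1)^-1; first by rewrite invr_gt0.
move=> eta I eta1 card_I; have [J sub_JI card_J] := subset_of_card card_I.
have rank_J : \rank (Xsub X J) = n.
  by apply/eqP; apply: (forall_inP nu_full J); rewrite card_J.
have sum_JI : \sum_(t in J) `|xdot t eta| <= \sum_(t in I) `|xdot t eta|.
  by rewrite [leRHS](big_setID J) /= (setIidPr sub_JI) lerDl sumr_ge0.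
have pinv_le : pinv_l1 J <= S.
  by rewrite /S (bigD1 J) //= lerDl sumr_ge0 // => J' _; exact: pinv_l1_ge0.
have : 1 <= (S + 1) * \sum_(t in I) `|xdot t eta|.
  rewrite -eta1; apply: le_trans (full_rank_bound eta rank_J) _.
  by apply: ler_pM; [exact: pinv_l1_ge0|exact: sumr_ge0|lra|exact: sum_JI].
by move=> S_bound; rewrite -[_^-1]mulr1 ler_pdivrMl.
Qed.

End Genericity.

Section Gamma.
Variables (R : realType) (n N : nat) (X : 'M[R]_(n, N)) (m : nat).
Hypotheses (n_gt0 : (0 < n)%N) (nu_le_m : (nu X <= m)%N) (m_le_N : (m <= N)%N).

(* gamma_m is an infimum over a nonempty set bounded below by the genericity
   constant, hence positive. *)
Lemma gamma_pos : 0 < gamma X m.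
Proof.
have [c c_gt0 c_le] := genericity_lower_bound X.
apply: lt_le_trans c_gt0 _; apply: lb_le_inf.
  pose e0 : 'cV[R]_n := delta_mx (Ordinal n_gt0) 0.
  have e0_unit : norm2 e0 = 1.
    rewrite /norm2 (bigD1 (Ordinal n_gt0)) //= big1 => [|k nk].
      by rewrite mxE !eqxx expr1n addr0 sqrtr1.
    by rewrite mxE (negbTE nk) expr0n.
  eexists; exists e0, [set: 'I_N]; split=> //; split=> //.
  by rewrite cardsT card_ord.
move=> _ [eta [I [eta1 [card_I ->]]]]; rewrite Xsub_l1.
exact: c_le eta1 (leq_trans nu_le_m card_I).
Qed.

Lemma gamma_bound (u : 'cV[R]_n) (I : {set 'I_N}) : (m <= #|I|)%N ->
  gamma X m * norm2 u <= \sum_(t in I) `|xdot X t u|.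
Proof.
move=> card_I; have [u0|u_neq0] := eqVneq (norm2 u) 0.
  by rewrite u0 mulr0 sumr_ge0.
have u_gt0 : 0 < norm2 u by rewrite lt_def u_neq0 sqrtr_ge0.
set eta := (norm2 u)^-1 *: u.
have eta1 : norm2 eta = 1.
  by rewrite norm2_scale ger0_norm ?invr_ge0 ?ltW // mulVf.
have bounded : has_lbound [set g | exists (eta : 'cV[R]_n) (I : {set 'I_N}),
    norm2 eta = 1 /\ (m <= #|I|)%N /\
    g = \sum_(j < #|I|) `|((Xsub X I)^T *m eta) j 0|].
  by exists 0 => g [e [J [_ [_ ->]]]]; exact: sumr_ge0.
have := ge_inf bounded (ex_intro _ eta (ex_intro _ I (conj eta1 (conj card_I erefl)))).
rewrite -/(gamma X m) Xsub_l1.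
under eq_bigr do rewrite xdot_scale normrM ger0_norm ?invr_ge0 ?ltW //.
by rewrite -mulr_sumr -ler_pdivlMr // mulrC.
Qed.

End Gamma.

Section ErrorBound.
Variables (R : realType) (n s N : nat) (X : 'M[R]_(n, N)) (y : 'I_N -> R).
Implicit Types A : 'M[R]_(n, s).

Let dphi A A' t := phi X y A t - phi X y A' t.

Lemma xi_bound r A A' (T : {set 'I_N}) : (#|T| <= r)%N ->
  \sum_(t in T) `|dphi A A' t| <= xi s X y r * l1 (dphi A A').
Proof.
move=> card_T.
have [eq_phi|neq_phi] := pselect (phi X y A = phi X y A').
  by rewrite /l1 /dphi eq_phi !big1 ?mulr0 // => t _; rewrite subrr normr0.
have l1_gt0 : 0 < l1 (dphi A A').
  rewrite lt_def sumr_ge0 // andbT; apply: contra_notN neq_phi => /eqP l1_0.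
  apply/funext => t; apply/eqP; rewrite -subr_eq0 -normr_eq0; apply/eqP.
  exact: (psumr_eq0P (fun j _ => normr_ge0 (dphi A A' j)) l1_0).
have bounded : has_ubound [set q | exists A A' (T : {set 'I_N}),
    phi X y A <> phi X y A' /\ (#|T| <= r)%N /\
    q = (\sum_(t in T) `|phi X y A t - phi X y A' t|) /
        l1 (fun t => phi X y A t - phi X y A' t)].
  exists 1 => _ [B [B' [T' [_ [_ ->]]]]].
  have [l1_0|l1_neq0] := eqVneq (l1 (dphi B B')) 0.
    by rewrite /dphi in l1_0; rewrite l1_0 invr0 mulr0.
  rewrite ler_pdivrMr ?mul1r ?sum_sub_le // lt_def l1_neq0.
  exact: sumr_ge0.
have := ub_le_sup bounded (ex_intro _ A (ex_intro _ A' (ex_intro _ T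
  (conj neq_phi (conj card_T erefl))))).
by rewrite ler_pdivrMr.
Qed.

(* Pointwise step of the error bound, where k says whether w is allowed to be
   nonzero at the point considered. *)
Lemma residual_step (a b w : R) (k : bool) : (~~ k -> w = 0) ->
  `|a| - `|b| <= 2 * (if k then `|b - a| else 0) - `|b - a| + 2 * `|a - w|.
Proof.
move=> w0; have := ler_normB b a; have := lerB_dist a b.
rewrite distrC; have := normr_ge0 (a - w).
by case: k w0 => [_|/(_ isT)->]; rewrite ?subr0; lra.
Qed.

Variables (A0 Ahat : 'M[R]_(n, s)).
Hypothesis Ahat_better : J X y Ahat <= J X y A0.

Lemma error_bound_sparse (r : nat) (w : 'I_N -> R) :
  (#|[set t | w t != 0%R]| <= r)%N ->
  (1 - 2 * xi s X y r) * l1 (dphi Ahat A0) <= 2 * l1 (fun t => phi X y A0 t - w t).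
Proof.
set T := [set t | w t != 0] => card_T.
have conc := xi_bound Ahat A0 card_T.
have steps : \sum_t (`|phi X y A0 t| - `|phi X y Ahat t|) <=
    \sum_t (2 * (if t \in T then `|dphi Ahat A0 t| else 0) - `|dphi Ahat A0 t|
            + 2 * `|phi X y A0 t - w t|).
  apply: ler_sum => t _; apply: residual_step.
  by rewrite inE negbK => /eqP.
rewrite sumrB big_split /= big_split /= sumrN -!mulr_sumr -big_mkcond /= in steps.
move: Ahat_better conc steps; rewrite /J /l1; lra.
Qed.

(* (1) of the outline: taking the infimum over sparse w. *)
Lemma error_bound r :
  (1 - 2 * xi s X y r) * l1 (dphi Ahat A0) <= 2 * delta X y r A0.
Proof.
rewrite -ler_pdivrMl //; apply: lb_le_inf.
  exists (l1 (fun t => phi X y A0 t - 0)), (fun _ => 0); split => //.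
  have -> : [set t : 'I_N | (0 : R) != 0] = set0 by apply/setP => t; rewrite !inE eqxx.
  by rewrite cards0.
move=> _ [w [card_w ->]]; rewrite ler_pdivrMl //.
exact: error_bound_sparse.
Qed.

End ErrorBound.

Lemma Iset_fibre (R : realType) (n s N : nat) (X : 'M[R]_(n, N)) (y : 'I_N -> R)
    (A : 'M[R]_(n, s)) sg :
  sigma_opt X y A = Some sg -> forall i, Iset X y A i = [set t | sg t == i].
Proof. by move=> sigma_A i; apply/setP => t; rewrite !inE sigma_A. Qed.

Section Blocks.
Variables (R : realType) (n s N : nat) (X : 'M[R]_(n, N)) (y : 'I_N -> R).
Variables (A0 Ahat : 'M[R]_(n, s)) (sg0 sgh : {ffun 'I_N -> 'I_s}).
Hypotheses (sigma_A0 : sigma_opt X y A0 = Some sg0)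
  (sigma_Ahat : sigma_opt X y Ahat = Some sgh).

Definition block (i j : 'I_s) : {set 'I_N} :=
  [set t | sg0 t == i] :&: [set t | sgh t == j].

Lemma Iset_block i j : Iset X y A0 i :&: Iset X y Ahat j = block i j.
Proof. by rewrite (Iset_fibre sigma_A0) (Iset_fibre sigma_Ahat). Qed.

Let h t := phi X y Ahat t - phi X y A0 t.

Lemma residual_diff_block i j t :
  t \in block i j -> h t = xdot X t (col i A0 - col j Ahat).
Proof.
rewrite !inE => /andP[/eqP sg0_t /eqP sgh_t].
rewrite /h /phi sigma_A0 sigma_Ahat sg0_t sgh_t /res /xdot.
rewrite (_ : forall a b c : R, (a - b) - (a - c) = c - b); last by move=> *; ring.
by rewrite -sumrB; apply: eq_bigr => k _; rewrite !mxE mulrBr.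
Qed.

Lemma block_lower_bound m i j : (m <= #|block i j|)%N ->
  gamma X m * norm2 (col i A0 - col j Ahat) <= \sum_(t in block i j) `|h t|.
Proof.
move=> /(gamma_bound X (col i A0 - col j Ahat)); congr (_ <= _).
by apply: eq_bigr => t t_in; rewrite (residual_diff_block t_in).
Qed.

(* Blocks of two distinct modes of A0 are disjoint, so their contributions
   add up to at most ||h||_1. *)
Lemma two_blocks_le_l1 i i' j : i != i' ->
  \sum_(t in block i j) `|h t| + \sum_(t in block i' j) `|h t| <= l1 h.
Proof.
move=> neq_ii'; rewrite -bigU /=; first exact: sum_sub_le (fun t => normr_ge0 (h t)).
apply/pred0P => t /=; rewrite !inE.
by case: (sg0 t =P i) => //= ->; rewrite (negbTE neq_ii') andbF.
Qed.

Lemma no_shared_mode m r i i' j :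
  (0 < n)%N -> (nu X <= m)%N -> (m <= N)%N ->
  xi s X y r < 1 / 2 -> J X y Ahat <= J X y A0 -> i != i' ->
  2 * delta X y r A0 / (gamma X m * (1 - 2 * xi s X y r))
    < norm2 (col i A0 - col i' A0) ->
  (m <= #|block i j|)%N -> (m <= #|block i' j|)%N -> False.
Proof.
move=> n_gt0 nu_le_m m_le_N xi_small Ahat_better neq_ii' separated big_i big_i'.
set D := norm2 _ in separated; set G := gamma X m; set e := 1 - 2 * _ in separated.
have G_gt0 : 0 < G := gamma_pos n_gt0 nu_le_m m_le_N.
have e_gt0 : 0 < e by rewrite /e; lra.
have GD_le : G * D <= l1 h.
  have tri : D <= norm2 (col i A0 - col j Ahat) + norm2 (col i' A0 - col j Ahat).
    rewrite -(norm2_opp (col i' A0 - _)); apply: le_trans (norm2_triangle _ _).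
    by rewrite opprB addrA subrK.
  apply: le_trans (two_blocks_le_l1 j neq_ii').
  apply: le_trans (ler_wpM2l (ltW G_gt0) tri) _.
  by rewrite mulrDr; apply: lerD; exact: block_lower_bound.
have := error_bound Ahat_better r; rewrite -/e.
move: separated; rewrite ltr_pdivrMr ?mulr_gt0 // => separated err.
have : e * (G * D) <= e * l1 h by rewrite ler_pM2l.
by move: separated err; rewrite -/G -/h; lra.
Qed.

End Blocks.

Lemma pigeonhole_fibre (T : finType) (k m : nat) (f : T -> 'I_k) (A : {set T}) :
  (0 < k)%N -> (k * m <= #|A|)%N ->
  exists j, (m <= #|A :&: [set t | f t == j]|)%N.
Proof.
move=> k_gt0 card_A; apply/existsP; move: card_A; apply: contraLR.
rewrite negb_exists -ltnNge => /forallP small.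
have -> : #|A| = (\sum_(j < k) #|A :&: [set t | f t == j]|)%N.
  rewrite -sum1_card (partition_big f predT) //=; apply: eq_bigr => j _.
  by rewrite -sum1_card; apply: eq_bigl => t; rewrite !inE.
apply: leq_trans (_ : \sum_(j < k) (#|A :&: [set t | f t == j]| + 1) <= k * m)%N.
  by rewrite big_split /= sum_nat_const card_ord muln1 -[X in (X < _)%N]addn0 ltn_add2l.
by rewrite -[k in (_ <= k * m)%N]card_ord -sum_nat_const leq_sum // => j _;
  rewrite addn1 ltnNge small.
Qed.

Theorem lemma7 (R : realType) (n s N : nat)
  (X : 'M[R]_(n, N)) (y : 'I_N -> R) :
  (0 < n)%N -> (0 < s)%N -> (0 < N)%N ->
  \rank X = n ->
  forall m : nat, (nu X <= m)%N ->
  forall A0 : 'M[R]_(n, s),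
  (forall i : 'I_s, (s * m <= #|Iset X y A0 i|)%N) ->
  forall r : nat, (r <= N)%N ->
  xi s X y r < 1 / 2 ->
  (forall i j : 'I_s, i != j ->
     2 * delta X y r A0 / (gamma X m * (1 - 2 * xi s X y r))
       < norm2 (col i A0 - col j A0)) ->
  forall Ahat : 'M[R]_(n, s),
  (forall A : 'M[R]_(n, s), J X y Ahat <= J X y A) ->
  comparable_over X y A0 Ahat.
Proof.
move=> n_gt0 s_gt0 _ _ m nu_le_m A0 big_modes r _ xi_small separated Ahat hmin.
have [sg0 sigma_A0] := sigma_opt_some X y A0 s_gt0.
have [sgh sigma_Ahat] := sigma_opt_some X y Ahat s_gt0.
have m_le_N : (m <= N)%N.
  apply: leq_trans (leq_pmull m s_gt0) (leq_trans (big_modes (Ordinal s_gt0)) _).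
  by apply: leq_trans (max_card _) _; rewrite card_ord.
have match_i i : exists j, (m <= #|block sg0 sgh i j|)%N.
  have := big_modes i; rewrite (Iset_fibre sigma_A0) => big_i.
  by have [j big_ij] := pigeonhole_fibre sgh s_gt0 big_i; exists j.
pose pi i := xchoose (match_i i).
have pi_inj : injective pi.
  move=> i i' eq_pi; have [//|neq_ii'] := eqVneq i i'; exfalso.
  apply: (no_shared_mode sigma_A0 sigma_Ahat n_gt0 nu_le_m m_le_N xi_small
    (hmin A0) neq_ii' (separated i i' neq_ii') (xchooseP (match_i i))).
  by rewrite -/(pi i) eq_pi; exact: xchooseP (match_i i').
exists (perm pi_inj) => i; rewrite permE (Iset_block sigma_A0 sigma_Ahat).
exact: leq_trans nu_le_m (xchooseP (match_i i)).
Qed.
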